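(* Let $P$ be a minimal Fano polytope in $\mathbb{R}^3$ with vertex set $\{x_1,x_2,x_3,y_1,-y_1\}$ such that $x_1,x_2,x_3$ are the vertices of a Fano triangle. Then, up to the action of $GL(3,\mathbb{Z})$, $P$ is the convex hull of either $\{(1,0,0),(0,1,0),(-1,-1,0),(0,0,1),(0,0,-1)\}$ or $\{(1,0,0),(0,1,0),(-1,-1,0),(1,2,3),(-1,-2,-3)\}$.
   Context: A Fano polytope is a convex polytope $P\subset\mathbb{R}^3$ with vertices in $\mathbb{Z}^3$ such that the only lattice point of $P$ that is not a vertex is the origin, which lies strictly in the interior of $P$. A Fano polytope with vertex set $\{x_1,\ldots,x_k\}$ is minimal if for every $j$ the convex hull of $\{x_1,\ldots,x_k\}\setminus\{x_j\}$ is not a Fano polytope. A Fano triangle is a triangle with vertices in $\mathbb{Z}^3$ lying in a plane through the origin, whose only lattice point other than its vertices is the origin, which lies in its relative interior. *)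

(* Points of Z^3 are integer row vectors 'rV[int]_3;
   convex geometry is done over the rationals. *)
From HB Require Import structures.
From mathcomp Require Import all_boot all_order all_algebra.
Set Implicit Arguments. Unset Strict Implicit. Unset Printing Implicit Defensive.
Import Order.TTheory GRing.Theory Num.Theory.
Local Open Scope ring_scope.

Definition pt := 'rV[int]_3.

Definition toQ (x : pt) : 'rV[rat]_3 := map_mx (fun z : int => z%:~R) x.

Definition in_conv (S : seq pt) (x : 'rV[rat]_3) : Prop :=
  exists w : 'I_(size S) -> rat,
    [/\ forall i, 0 <= w i,
        \sum_i w i = 1 &
        \sum_i w i *: toQ (nth 0 S i) = x].

Definition in_interior (S : seq pt) (x : 'rV[rat]_3) : Prop :=
  exists eps : rat, 0 < eps /\
    forall v : 'rV[rat]_3, (forall i, `|v 0 i| <= eps) -> in_conv S (x + v).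

Definition vertex_set (S : seq pt) : Prop :=
  forall v, v \in S -> ~ in_conv (filter (fun u => u != v) S) (toQ v).

Definition fano (S : seq pt) : Prop :=
  [/\ vertex_set S,
      (forall z : pt, in_conv S (toQ z) -> z \in S \/ z = 0) &
      in_interior S 0].

Definition minimal_fano (S : seq pt) : Prop :=
  fano S /\ forall v, v \in S -> ~ fano (filter (fun u => u != v) S).

Definition fano_triangle (a b c : pt) : Prop :=
  [/\ \rank (col_mx (toQ b - toQ a) (toQ c - toQ a)) = 2%N,
      \det (col_mx (toQ a) (col_mx (toQ b) (toQ c))) = 0,    (* plane through 0 *)
      (exists wa wb wc : rat, [/\ 0 < wa, 0 < wb, 0 < wc, wa + wb + wc = 1 &
            wa *: toQ a + wb *: toQ b + wc *: toQ c = 0])    (* 0 in relative interior *)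
    & (forall z : pt, in_conv [:: a; b; c] (toQ z) ->
         [\/ z = a, z = b, z = c | z = 0])].

Definition mkpt (a b c : int) : pt := \row_(i < 3) [:: a; b; c]`_i.

Definition P1 : seq pt :=
  [:: mkpt 1 0 0; mkpt 0 1 0; mkpt (-1) (-1) 0; mkpt 0 0 1; mkpt 0 0 (-1)].
Definition P2 : seq pt :=
  [:: mkpt 1 0 0; mkpt 0 1 0; mkpt (-1) (-1) 0; mkpt 1 2 3; mkpt (-1) (-2) (-3)].

Definition actGL (A : 'M[int]_3) (S : seq pt) : seq pt := map (fun x => x *m A) S.

From HB Require Import structures.
From mathcomp Require Import all_boot all_order all_algebra.
From mathcomp Require Import lra zify ring.
Set Implicit Arguments. Unset Strict Implicit. Unset Printing Implicit Defensive.
Import Order.TTheory GRing.Theory Num.Theory.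
Local Open Scope ring_scope.

(** Lattice points of the plane of x1, x2
    that lie in the half-open parallelogram spanned by x1 and x2 would be lattice
    points of the triangle (possibly after reflection through (x1 + x2)/2), so
    x1, x2 is a basis of the lattice points of their plane; x3 is then an
    integral combination of them, and only x3 = -x1 - x2 leaves no extra lattice
    point in the triangle.  The basis property makes the 2x2 minors of x1, x2
    coprime, so a unimodular matrix sends x1, x2, x3 to e1, e2, -e1-e2.

    As 0 is interior, y1 is sent off this plane, and a shear fixing the plane
    brings it to y = (a, b, c) with 0 <= a, b < c.  A lattice point (u, v, h)
    with 0 < |h| < c lies in the bipyramid over the triangle with apices y and -y
    iff (u, v) - (h/c)(a, b) lies in the triangle scaled by 1 - |h|/c; a handful
    of such points rule out everything except (0,0,1), (1,2,3) and (2,1,3), and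
    the last one becomes the second after a shear exchanging the apices. *)

Definition i0 : 'I_3 := @Ordinal 3 0 isT.
Definition i1 : 'I_3 := @Ordinal 3 1 isT.
Definition i2 : 'I_3 := @Ordinal 3 2 isT.

Lemma ord3P (P : 'I_3 -> Prop) : P i0 -> P i1 -> P i2 -> forall i, P i.
Proof.
by move=> P0 P1 P2 [[|[|[|k]]] lt_k3] //; [move: P0 | move: P1 | move: P2];
  congr P; apply: val_inj.
Qed.

Lemma row3P (R : Type) (u v : 'rV[R]_3) :
  u 0 i0 = v 0 i0 -> u 0 i1 = v 0 i1 -> u 0 i2 = v 0 i2 -> u = v.
Proof. by move=> e0 e1 e2; apply/rowP; elim/ord3P. Qed.

Lemma mulmx3E (R : pzRingType) m (A : 'M[R]_(m, 3)) (B : 'M[R]_3) i j :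
  (A *m B) i j = A i i0 * B i0 j + A i i1 * B i1 j + A i i2 * B i2 j.
Proof.
rewrite mxE !big_ord_recl big_ord0 addr0 addrA.
have -> : lift ord0 (lift ord0 ord0) = i2 :> 'I_3 by apply: val_inj.
have -> : lift ord0 ord0 = i1 :> 'I_3 by apply: val_inj.
by have -> : ord0 = i0 :> 'I_3 by apply: val_inj.
Qed.

Lemma mkptE (x : pt) : x = mkpt (x 0 i0) (x 0 i1) (x 0 i2).
Proof. by apply: row3P; rewrite mxE. Qed.

Lemma oppr_mkpt (a b c : int) : - mkpt a b c = mkpt (- a) (- b) (- c).
Proof. by apply: row3P; rewrite !mxE. Qed.

Definition toQm (A : 'M[int]_3) : 'M[rat]_3 := map_mx (fun z : int => z%:~R) A.

Lemma toQE (x : pt) i : toQ x 0 i = (x 0 i)%:~R.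
Proof. by rewrite mxE. Qed.

Lemma toQD (x y : pt) : toQ (x + y) = toQ x + toQ y.
Proof. exact: map_mxD. Qed.

Lemma toQN (x : pt) : toQ (- x) = - toQ x.
Proof. exact: map_mxN. Qed.

Lemma toQB (x y : pt) : toQ (x - y) = toQ x - toQ y.
Proof. by rewrite toQD toQN. Qed.

Lemma toQZ (k : int) (x : pt) : toQ (k *: x) = k%:~R *: toQ x.
Proof. exact: map_mxZ. Qed.

Lemma toQ0 : toQ 0 = 0.
Proof. exact: map_mx0. Qed.

Lemma toQM (x : pt) (A : 'M[int]_3) : toQ (x *m A) = toQ x *m toQm A.
Proof. exact: map_mxM. Qed.

Lemma toQ_inj : injective toQ.
Proof. by move=> x y exy; apply/rowP => i; apply: (@intr_inj rat); rewrite -!toQE exy. Qed.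

Lemma toQm_unit (A : 'M[int]_3) : A \in unitmx -> toQm A \in unitmx.
Proof.
move=> A_unit; have [] // := @mulmx1_unit _ _ (toQm A) (toQm (invmx A)).
by rewrite -map_mxM mulmxV // map_mx1.
Qed.

(* Weights indexed by [nat] rather than by ['I_(size S)] survive rewriting [size S]. *)
Lemma in_convE (S : seq pt) x :
  in_conv S x <-> exists w : nat -> rat,
    [/\ forall i, 0 <= w i, \sum_(i < size S) w i = 1 &
        \sum_(i < size S) w i *: toQ S`_i = x].
Proof.
split=> [[w [w_ge0 w_sum w_comb]] | [w [w_ge0 w_sum w_comb]]]; last by exists (fun i => w i).
exists (fun n => odflt 0 (omap w (insub n))); split.
- by move=> n; case: insub => //= i; apply: w_ge0.
- by rewrite -w_sum; apply: eq_bigr => i _; rewrite valK.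
- by rewrite -w_comb; apply: eq_bigr => i _; rewrite valK.
Qed.

Lemma sum_ord3 (V : nmodType) (F : 'I_3 -> V) :
  \sum_(i < 3) F i = F i0 + F i1 + F i2.
Proof.
rewrite !big_ord_recl big_ord0 addr0 !addrA.
by congr (F _ + F _ + F _); apply: val_inj.
Qed.

Lemma sum_ord5 (V : nmodType) (F : 'I_5 -> V) :
  \sum_(i < 5) F i = F 0 + F 1 + F 2 + F 3 + F 4.
Proof.
rewrite !big_ord_recl big_ord0 addr0 !addrA.
by congr (F _ + F _ + F _ + F _ + F _); apply: val_inj.
Qed.

Lemma in_conv3 (p1 p2 p3 : pt) x :
  in_conv [:: p1; p2; p3] x <->
  exists w1 w2 w3 : rat,
    [/\ [/\ 0 <= w1, 0 <= w2 & 0 <= w3], w1 + w2 + w3 = 1 &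
        w1 *: toQ p1 + w2 *: toQ p2 + w3 *: toQ p3 = x].
Proof.
rewrite in_convE; split=> [[w [w_ge0]] | [w1 [w2 [w3 [[? ? ?] ? ?]]]]].
  by rewrite /= !sum_ord3 => ? ?; exists (w 0%N), (w 1%N), (w 2%N).
exists (nth 0 [:: w1; w2; w3]); rewrite /= !sum_ord3; split=> //.
by case=> [|[|[|n]]] /=; rewrite ?nth_nil.
Qed.

Lemma in_conv5 (p1 p2 p3 p4 p5 : pt) x :
  in_conv [:: p1; p2; p3; p4; p5] x <->
  exists w1 w2 w3 w4 w5 : rat,
    [/\ [/\ 0 <= w1, 0 <= w2, 0 <= w3, 0 <= w4 & 0 <= w5],
        w1 + w2 + w3 + w4 + w5 = 1 &
        w1 *: toQ p1 + w2 *: toQ p2 + w3 *: toQ p3 + w4 *: toQ p4 + w5 *: toQ p5 = x].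
Proof.
rewrite in_convE; split=> [[w [w_ge0]] | [w1 [w2 [w3 [w4 [w5 [[? ? ? ? ?] ? ?]]]]]]].
  by rewrite /= !sum_ord5 => ? ?; exists (w 0%N), (w 1%N), (w 2%N), (w 3%N), (w 4%N).
exists (nth 0 [:: w1; w2; w3; w4; w5]); rewrite /= !sum_ord5; split=> //.
by case=> [|[|[|[|[|n]]]]] /=; rewrite ?nth_nil.
Qed.

Lemma in_conv_swap45 (p1 p2 p3 p4 p5 : pt) x :
  in_conv [:: p1; p2; p3; p4; p5] x <-> in_conv [:: p1; p2; p3; p5; p4] x.
Proof.
suff swap q4 q5 : in_conv [:: p1; p2; p3; q4; q5] x -> in_conv [:: p1; p2; p3; q5; q4] x.
  by split; apply: swap.
case/in_conv5=> [w1 [w2 [w3 [w4 [w5 [[? ? ? ? ?] w_sum w_comb]]]]]].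
by apply/in_conv5; exists w1, w2, w3, w5, w4; rewrite addrAC w_sum addrAC w_comb.
Qed.

Lemma in_conv_map (S : seq pt) (A : 'M[int]_3) x :
  in_conv S x -> in_conv (actGL A S) (x *m toQm A).
Proof.
case/in_convE=> w [w_ge0 w_sum w_comb]; apply/in_convE; exists w.
rewrite /actGL size_map; split=> //; rewrite -w_comb mulmx_suml.
apply: eq_bigr => i _; rewrite -scalemxAl -toQM.
by rewrite (nth_map 0) ?mul0mx.
Qed.

Lemma actGL_mul (A B : 'M[int]_3) (S : seq pt) : actGL (A *m B) S = actGL B (actGL A S).
Proof. by rewrite /actGL -map_comp; apply: eq_map => x; rewrite /= mulmxA. Qed.

Definition lattice_closed (S : seq pt) : Prop :=
  forall z : pt, in_conv S (toQ z) -> z \in S \/ z = 0.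

Lemma lattice_closed_map (S : seq pt) (A : 'M[int]_3) :
  A \in unitmx -> lattice_closed S -> lattice_closed (actGL A S).
Proof.
move=> A_unit S_closed z /(in_conv_map (invmx A)).
rewrite -toQM /actGL -map_comp (eq_map (fun x => mulmxK A_unit x)) map_id.
case/S_closed=> [zS | z0]; [left | right].
  by rewrite -(mulmxKV A_unit z); apply: map_f.
by rewrite -(mulmxKV A_unit z) z0 mul0mx.
Qed.

Lemma interior_not_in_plane (S : seq pt) (u : 'cV[rat]_3) :
  in_interior S 0 -> u != 0 -> exists2 p, p \in S & toQ p *m u != 0.
Proof.
(* Test the interior at eps e_j, where u_j != 0. *)
move=> [eps [eps_gt0 ball_in]] u_neq0.
have [j uj_neq0] : exists j, u j 0 != 0.
  apply/existsP; move: u_neq0; apply: contraR; rewrite negb_exists => /forallP u0.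
  by apply/eqP/matrixP => i k; rewrite ord1 mxE; apply/eqP/negPn.
have [|w [_ _ w_comb]] := ball_in (eps *: delta_mx 0 j).
  move=> i; rewrite !mxE eqxx normrM (gtr0_norm eps_gt0) ler_piMr ?(ltW eps_gt0) //.
  by case: (i == j); rewrite ?normr1 ?normr0.
apply/hasP; apply: contraT; rewrite -all_predC => /allP Sperp.
have := congr1 (fun v : 'rV[rat]_3 => (v *m u) 0 0) w_comb.
rewrite add0r mulmx_suml summxE big1 => [|i _]; last first.
  by rewrite -scalemxAl (eqP (negPn (Sperp _ (mem_nth 0 (ltn_ord i))))) scaler0 mxE.
rewrite -scalemxAl mxE -rowE mxE => /esym/eqP.
by rewrite mulf_eq0 gt_eqF // (negPf uj_neq0).
Qed.

Lemma interior_coord_neq0 (S : seq pt) (A : 'M[int]_3) j :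
  in_interior S 0 -> A \in unitmx -> exists2 p, p \in S & (p *m A) 0 j != 0.
Proof.
move=> S_int A_unit.
have [|p pS pA] := interior_not_in_plane (u := toQm A *m delta_mx j 0) S_int.
  apply: contraTneq isT => Ae0.
  have := congr1 (mulmx (invmx (toQm A))) Ae0.
  rewrite mulKmx ?toQm_unit // mulmx0 => /matrixP/(_ j 0).
  by rewrite !mxE !eqxx.
exists p => //; apply: contraNneq pA => pA0.
apply/eqP; rewrite mulmxA -toQM -colE; apply/matrixP => i k.
by rewrite ord1 [LHS]mxE toQE pA0 mxE.
Qed.

Lemma comb_submx (F : fieldType) n (u v : 'rV[F]_n) (a b : F) :
  ((a *: u + b *: v)%R <= col_mx u v)%MS.
Proof.
apply/submxP; exists (row_mx a%:M b%:M : 'M_(1, 1 + 1)).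
by rewrite mul_row_col !mul_scalar_mx.
Qed.

Lemma row_free_comb_eq0 (F : fieldType) n (u v : 'rV[F]_n) (a b : F) :
  row_free (col_mx u v) -> a *: u + b *: v = 0 -> a = 0 /\ b = 0.
Proof.
move=> uv_free ab_comb.
have /eqP : (row_mx a%:M b%:M : 'M_(1, 1 + 1)) *m col_mx u v = 0.
  by rewrite mul_row_col !mul_scalar_mx.
rewrite mulmx_free_eq0 // => /eqP ab0; split.
- by have := congr1 (fun M : 'M_(1, 1 + 1) => M 0 (lshift 1 0)) ab0; rewrite row_mxEl !mxE.
- by have := congr1 (fun M : 'M_(1, 1 + 1) => M 0 (rshift 1 0)) ab0; rewrite row_mxEr !mxE.
Qed.

Definition cross (R : pzRingType) (u v : 'rV[R]_3) : 'rV[R]_3 :=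
  \row_(i < 3) [:: u 0 i1 * v 0 i2 - u 0 i2 * v 0 i1;
                   u 0 i2 * v 0 i0 - u 0 i0 * v 0 i2;
                   u 0 i0 * v 0 i1 - u 0 i1 * v 0 i0]`_i.

Definition dot (R : pzRingType) (u v : 'rV[R]_3) : R :=
  u 0 i0 * v 0 i0 + u 0 i1 * v 0 i1 + u 0 i2 * v 0 i2.

Lemma cross_delta_cross (R : comPzRingType) (u v : 'rV[R]_3) j k :
  cross (delta_mx 0 j) (cross u v) 0 k = v 0 j * u 0 k - u 0 j * v 0 k.
Proof. by elim/ord3P: j; elim/ord3P: k; rewrite !mxE /=; ring. Qed.

Lemma dvdz_cross (u v : pt) (d : int) :
  (forall i, d %| v ord0 i)%Z -> forall i, (d %| cross u v ord0 i)%Z.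
Proof. by move=> dv; elim/ord3P; rewrite mxE /=; apply: rpredB; apply: dvdz_mull. Qed.

Definition e1 : pt := mkpt 1 0 0.
Definition e2 : pt := mkpt 0 1 0.
Definition e3 : pt := mkpt (-1) (-1) 0.

Definition mk33 (r0 r1 r2 : pt) : 'M[int]_3 := \matrix_(i < 3) [:: r0; r1; r2]`_i.

Lemma mulmx_mk33 (x r0 r1 r2 : pt) :
  x *m mk33 r0 r1 r2 = x 0 i0 *: r0 + x 0 i1 *: r1 + x 0 i2 *: r2.
Proof. by apply/rowP => j; rewrite mulmx3E !mxE. Qed.

Lemma mk33_mulmx (r0 r1 r2 : pt) (B : 'M[int]_3) :
  mk33 r0 r1 r2 *m B = mk33 (r0 *m B) (r1 *m B) (r2 *m B).
Proof. by apply/row_matrixP => i; rewrite row_mul !rowK; elim/ord3P: i. Qed.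

(* The transposed matrix of cross products is the adjugate of [mk33 u v w]. *)
Lemma mk33_mul_cross (u v w : pt) :
  mk33 u v w *m (mk33 (cross v w) (cross w u) (cross u v))^T = (dot (cross u v) w)%:M.
Proof.
apply/matrixP => i j; rewrite mulmx3E /dot !mxE.
by elim/ord3P: i; elim/ord3P: j; rewrite /= !mxE /= ?mulr1n ?mulr0n; ring.
Qed.

Lemma unimodular_basis (u v w : pt) : dot (cross u v) w = 1 ->
  exists A : 'M[int]_3, [/\ A \in unitmx, u *m A = e1 & v *m A = e2].
Proof.
move=> uvw1; set A := (mk33 (cross v w) (cross w u) (cross u v))^T.
have uvwA : mk33 u v w *m A = 1%:M by rewrite mk33_mul_cross uvw1.
exists A; split; first by case/mulmx1_unit: uvwA.
- have := congr1 (row i0) uvwA; rewrite row_mul rowK => ->.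
  by apply: row3P; rewrite !mxE.
- have := congr1 (row i1) uvwA; rewrite row_mul rowK => ->.
  by apply: row3P; rewrite !mxE.
Qed.

Definition shear (k l s : int) : 'M[int]_3 := mk33 e1 e2 (mkpt k l s).

Lemma mulmx_shear (a b c k l s : int) :
  mkpt a b c *m shear k l s = mkpt (a + c * k) (b + c * l) (c * s).
Proof. by rewrite mulmx_mk33; apply: row3P; rewrite !mxE /=; ring. Qed.

Lemma mulmx_shear_plane (a b k l s : int) : mkpt a b 0 *m shear k l s = mkpt a b 0.
Proof. by rewrite mulmx_shear !mul0r !addr0. Qed.

Lemma shear_unit (k l s : int) : s = 1 \/ s = -1 -> shear k l s \in unitmx.
Proof.
move=> s_pm1; have [] // := @mulmx1_unit _ _ (shear k l s) (shear (- k * s) (- l * s) s).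
rewrite {1}/shear mk33_mulmx !mulmx_shear_plane mulmx_shear; case: s_pm1 => ->;
  by apply/matrixP => i j; elim/ord3P: i; elim/ord3P: j; rewrite !mxE /=; ring.
Qed.

Lemma shear_reduce (a b c : int) : c != 0 ->
  exists k l s : int,
    [/\ s = 1 \/ s = -1, 0 <= a + c * k < c * s & 0 <= b + c * l < c * s].
Proof.
move=> c_neq0; have := divz_eq a c; have := divz_eq b c.
have := modz_ge0 a c_neq0; have := ltz_mod a c_neq0.
have := modz_ge0 b c_neq0; have := ltz_mod b c_neq0.
have [c_gt0 | c_lt0] : 0 < c \/ c < 0 by lia.
  by exists (- (a %/ c)%Z), (- (b %/ c)%Z), 1; split; [left | lia | lia].
by exists (- (a %/ c)%Z), (- (b %/ c)%Z), (-1); split; [right | lia | lia].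
Qed.

Section FanoTriangle.

Variables (x1 x2 x3 : pt) (wa wb wc : rat).
Hypotheses (wa_gt0 : 0 < wa) (wb_gt0 : 0 < wb) (wc_gt0 : 0 < wc).
Hypothesis w_sum : wa + wb + wc = 1.
Hypothesis w_comb : wa *: toQ x1 + wb *: toQ x2 + wc *: toQ x3 = 0.
Hypothesis rank_edges : \rank (col_mx (toQ x2 - toQ x1) (toQ x3 - toQ x1)) = 2%N.
Hypothesis triangle_closed :
  forall z : pt, in_conv [:: x1; x2; x3] (toQ z) -> [\/ z = x1, z = x2, z = x3 | z = 0].

Let sigma := - wa / wc.
Let tau := - wb / wc.

Lemma x3_comb : toQ x3 = sigma *: toQ x1 + tau *: toQ x2.
Proof.
apply/rowP => i; have := congr1 (fun v : 'rV[rat]_3 => v 0 i) w_comb; rewrite !mxE => e.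
apply: (mulfI (lt0r_neq0 wc_gt0)); rewrite /sigma /tau.
transitivity (- (wa * (x1 0 i)%:~R + wb * (x2 0 i)%:~R)); first by lra.
by field; apply: lt0r_neq0.
Qed.

Lemma x12_free : row_free (col_mx (toQ x1) (toQ x2)).
Proof.
rewrite /row_free eqn_leq rank_leq_row -[X in (X <= _)%N]rank_edges mxrankS //.
have -> : toQ x2 - toQ x1 = (-1) *: toQ x1 + 1 *: toQ x2 by rewrite scaleN1r scale1r addrC.
have -> : toQ x3 - toQ x1 = (sigma - 1) *: toQ x1 + tau *: toQ x2.
  by rewrite x3_comb scalerBl scale1r addrAC.
by rewrite col_mx_sub !comb_submx.
Qed.

Lemma x12_comb_inj (s t s' t' : rat) :
  s *: toQ x1 + t *: toQ x2 = s' *: toQ x1 + t' *: toQ x2 -> s = s' /\ t = t'.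
Proof.
move=> /eqP; rewrite -subr_eq0 => /eqP st_comb.
have [] := @row_free_comb_eq0 _ _ _ _ (s - s') (t - t') x12_free.
  by rewrite -st_comb !scalerBl addrACA opprD.
by move=> /eqP + /eqP; rewrite !subr_eq0 => /eqP -> /eqP ->.
Qed.

Lemma triangle_lattice_comb (z : pt) (s t l1 l2 l3 : rat) :
  0 <= l1 -> 0 <= l2 -> 0 <= l3 -> l1 + l2 + l3 = 1 ->
  s = l1 + l3 * sigma -> t = l2 + l3 * tau ->
  toQ z = s *: toQ x1 + t *: toQ x2 ->
  [\/ s = 1 /\ t = 0, s = 0 /\ t = 1, s = sigma /\ t = tau | s = 0 /\ t = 0].
Proof.
move=> l1_ge0 l2_ge0 l3_ge0 l_sum s_eq t_eq z_comb.
have : in_conv [:: x1; x2; x3] (toQ z).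
  apply/in_conv3; exists l1, l2, l3; split=> //.
  by rewrite z_comb s_eq t_eq x3_comb; apply/rowP => i; rewrite !mxE; ring.
have coords (s' t' : rat) : toQ z = s' *: toQ x1 + t' *: toQ x2 -> s = s' /\ t = t'.
  by move=> st_comb; apply: x12_comb_inj; rewrite -z_comb.
case/triangle_closed=> z_eq; [apply: Or41 | apply: Or42 | apply: Or43 | apply: Or44];
  apply: coords; rewrite z_eq.
- by rewrite scale1r scale0r addr0.
- by rewrite scale1r scale0r add0r.
- exact: x3_comb.
- by rewrite toQ0 !scale0r addr0.
Qed.

Lemma sigma_lt0 : sigma < 0.
Proof. by rewrite /sigma mulNr oppr_lt0 divr_gt0. Qed.

Lemma tau_lt0 : tau < 0.
Proof. by rewrite /tau mulNr oppr_lt0 divr_gt0. Qed.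

Lemma triangle_comb_lattice (z : pt) (s t : rat) :
  0 <= s -> 0 <= t -> s + t <= 1 -> toQ z = s *: toQ x1 + t *: toQ x2 ->
  [\/ s = 0 /\ t = 0, s = 1 /\ t = 0 | s = 0 /\ t = 1].
Proof.
move=> s_ge0 t_ge0 st_le1 z_comb; have wc_neq0 := lt0r_neq0 wc_gt0.
have r_ge0 : 0 <= 1 - s - t by lra.
(* Add 1 - s - t times the vanishing combination of x1, x2, x3. *)
have [] := @triangle_lattice_comb z s t
  (s + (1 - s - t) * wa) (t + (1 - s - t) * wb) ((1 - s - t) * wc) _ _ _ _ _ _ z_comb.
- by rewrite addr_ge0 // mulr_ge0 // ltW.
- by rewrite addr_ge0 // mulr_ge0 // ltW.
- by rewrite mulr_ge0 // ltW.
- transitivity (s + t + (1 - s - t) * (wa + wb + wc)); first by ring.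
  by rewrite w_sum; ring.
- by rewrite /sigma; field.
- by rewrite /tau; field.
- exact: Or32.
- exact: Or33.
- by have := sigma_lt0; lra.
- exact: Or31.
Qed.

Lemma half_open_square_lattice (z : pt) (s t : rat) :
  0 <= s < 1 -> 0 <= t < 1 -> toQ z = s *: toQ x1 + t *: toQ x2 -> s = 0 /\ t = 0.
Proof.
move=> /andP[s_ge0 s_lt1] /andP[t_ge0 t_lt1] z_comb.
have [st_le1 | st_gt1] := lerP (s + t) 1.
  by case: (triangle_comb_lattice s_ge0 t_ge0 st_le1 z_comb) => [//|[]|[]]; lra.
(* Otherwise reflect z through (x1 + x2) / 2. *)
have : toQ (x1 + x2 - z) = (1 - s) *: toQ x1 + (1 - t) *: toQ x2.
  by rewrite toQB toQD z_comb; apply/rowP => i; rewrite !mxE; ring.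
by case/triangle_comb_lattice=> [|||[]|[]|[]]; lra.
Qed.

Lemma lattice_comb_int (z : pt) (s t : rat) :
  toQ z = s *: toQ x1 + t *: toQ x2 -> exists m n : int, s = m%:~R /\ t = n%:~R.
Proof.
move=> z_comb; set m := Num.floor s; set n := Num.floor t.
have /andP[m_le m_gt] := floor_itv s; have /andP[n_le n_gt] := floor_itv t.
rewrite intrD mulr1z in m_gt; rewrite intrD mulr1z in n_gt.
have : toQ (z - m *: x1 - n *: x2) = (s - m%:~R) *: toQ x1 + (t - n%:~R) *: toQ x2.
  by rewrite !toQB !toQZ z_comb; apply/rowP => i; rewrite !mxE; ring.
case/half_open_square_lattice=> [||sm tn]; [apply/andP; split; lra.. |].
by exists m, n; split; lra.
Qed.

Lemma lattice_comb_dvd (s t d : int) : d != 0 ->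
  (forall j, d %| s * x1 ord0 j + t * x2 ord0 j)%Z -> (d %| s)%Z /\ (d %| t)%Z.
Proof.
move=> d_neq0 d_dvd; have dQ_neq0 : (d%:~R : rat) != 0 by rewrite intr_eq0.
pose z : pt := \row_j ((s * x1 ord0 j + t * x2 ord0 j) %/ d)%Z.
have : toQ z = (s%:~R / d%:~R) *: toQ x1 + (t%:~R / d%:~R) *: toQ x2.
  apply/rowP => j; apply: (mulIf dQ_neq0); rewrite !mxE -intrM divzK //.
  by rewrite intrD !intrM; field.
case/lattice_comb_int=> m [n [sm tn]].
by split; apply/dvdzP; [exists m | exists n]; apply: (@intr_inj rat);
  rewrite intrM -?sm -?tn divfK.
Qed.

(* Otherwise -x1 or -x2 is an extra lattice point of the triangle. *)
Lemma sigma_eq_tau : sigma = tau.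
Proof.
have [m [n [sigma_m tau_n]]] := lattice_comb_int x3_comb.
have sigma_neg := sigma_lt0; have tau_neg := tau_lt0.
have D_gt0 : 0 < 1 - sigma - tau by lra.
have D_neq0 := lt0r_neq0 D_gt0.
case: (ltgtP m n) => [m_lt_n | n_lt_m | m_eq_n]; last by rewrite sigma_m tau_n m_eq_n.
- have : m + 1 <= n by lia.
  rewrite -(ler_int rat) intrD mulr1z -sigma_m -tau_n => sigma_lt_tau.
  exfalso; have [] := @triangle_lattice_comb (- x1) (-1) 0
    ((tau - sigma - 1) / (1 - sigma - tau)) (- 2 * tau / (1 - sigma - tau))
    (2 / (1 - sigma - tau)) _ _ _ _ _ _ _.
  1-3: by apply: divr_ge0; lra.
  1-3: by field.
  1: by rewrite toQN scaleN1r scale0r addr0.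
  1-4: by case; lra.
- have : n + 1 <= m by lia.
  rewrite -(ler_int rat) intrD mulr1z -sigma_m -tau_n => tau_lt_sigma.
  exfalso; have [] := @triangle_lattice_comb (- x2) 0 (-1)
    (- 2 * sigma / (1 - sigma - tau)) ((sigma - tau - 1) / (1 - sigma - tau))
    (2 / (1 - sigma - tau)) _ _ _ _ _ _ _.
  1-3: by apply: divr_ge0; lra.
  1-3: by field.
  1: by rewrite toQN scaleN1r scale0r add0r.
  1-4: by case; lra.
Qed.

Lemma sigma_eq_m1 : sigma = -1.
Proof.
have [m [_ [sigma_m _]]] := lattice_comb_int x3_comb.
have [m_eq | m_neq] := eqVneq m (-1); first by rewrite sigma_m m_eq intrN mulr1z.
have : m + 1 <= -1 by have := sigma_lt0; rewrite sigma_m ltrz0; lia.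
rewrite -(ler_int rat) intrD intrN mulr1z -sigma_m => sigma_le.
exfalso; have [] := @triangle_lattice_comb (- x1 - x2) (-1) (-1)
  (- (sigma + 1) / (1 - 2 * sigma)) (- (sigma + 1) / (1 - 2 * sigma))
  (3 / (1 - 2 * sigma)) _ _ _ _ _ _ _.
1-3: by apply: divr_ge0; lra.
1-3: by rewrite -?sigma_eq_tau; field; lra.
1: by rewrite toQB toQN !scaleN1r.
1-4: by case; lra.
Qed.

Lemma x3_eq : x3 = - x1 - x2.
Proof.
apply: toQ_inj.
by rewrite x3_comb -sigma_eq_tau sigma_eq_m1 toQB toQN !scaleN1r.
Qed.

Lemma cross_x12_dvd1 (d : int) :
  d != 0 -> (forall i, d %| cross x1 x2 ord0 i)%Z -> (d %| 1)%Z.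
Proof.
(* x2_j x1 - x1_j x2 = e_j x (x1 x x2) is divisible by d, hence so is x1_j. *)
move=> d_neq0 d_cross.
have d_x1 j : (d %| x1 ord0 j)%Z.
  have /(lattice_comb_dvd d_neq0) [_] :
      forall k, (d %| x2 ord0 j * x1 ord0 k + - x1 ord0 j * x2 ord0 k)%Z.
    by move=> k; rewrite mulNr -cross_delta_cross; apply: dvdz_cross.
  by rewrite rpredN.
have /(lattice_comb_dvd d_neq0) [] // : forall k, (d %| 1 * x1 ord0 k + 0 * x2 ord0 k)%Z.
by move=> k; rewrite mul1r mul0r addr0.
Qed.

Lemma cross_x12_unimodular : exists w : pt, dot (cross x1 x2) w = 1.
Proof.
set c := cross x1 x2; set g := gcdz (c 0 i0) (gcdz (c 0 i1) (c 0 i2)).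
have g_dvd d : (d %| g)%Z -> forall i, (d %| c ord0 i)%Z.
  by rewrite !dvdz_gcd => /and3P[d_c0 d_c1 d_c2]; elim/ord3P.
have g1 : g = 1.
  have [g0 | g_neq0] := eqVneq g 0.
    have two_dvd_c : forall i, (2 %| c ord0 i)%Z by apply: g_dvd; rewrite g0 dvdz0.
    by have := @cross_x12_dvd1 2 isT two_dvd_c.
  have := cross_x12_dvd1 g_neq0 (g_dvd g (dvdzz g)).
  by rewrite dvdz1 /g /gcdz absz_nat => /eqP ->.
have [u [v uv]] := Bezoutz (c 0 i0) (gcdz (c 0 i1) (c 0 i2)).
have [u' [v' uv']] := Bezoutz (c 0 i1) (c 0 i2).
exists (mkpt u (v * u') (v * v')); rewrite -g1 /g -uv -uv' /dot /c !mxE /=; ring.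
Qed.

End FanoTriangle.

Lemma fano_triangle_basis (x1 x2 x3 : pt) : fano_triangle x1 x2 x3 ->
  exists A : 'M[int]_3, [/\ A \in unitmx, x1 *m A = e1, x2 *m A = e2 & x3 *m A = e3].
Proof.
(* The determinant condition follows from the vanishing positive combination. *)
case=> rank_edges _ [wa [wb [wc [wa_gt0 wb_gt0 wc_gt0 w_sum w_comb]]]] closed.
have [w /unimodular_basis [A [A_unit x1A x2A]]] :=
  cross_x12_unimodular wa_gt0 wb_gt0 wc_gt0 w_sum w_comb rank_edges closed.
exists A; split=> //.
rewrite (x3_eq wa_gt0 wb_gt0 wc_gt0 w_sum w_comb rank_edges closed).
by rewrite mulmxBl mulNmx x1A x2A; apply: row3P; rewrite !mxE.
Qed.

Section Bipyramid.

Variables a b c : int.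
Let y := mkpt a b c.
Hypothesis closed : lattice_closed [:: e1; e2; e3; y; - y].

(* The three inequalities say, scaled by c, that (u, v) - (h/c) (a, b) lies in
   (1 - |h|/c) conv(e1, e2, e3); the witness weights put mass |h|/c on y or -y. *)
Lemma no_lattice_point (u v h : int) : h != 0 -> `|h| < c ->
  let q1 := c * u - h * a in let q2 := c * v - h * b in let r := c - `|h| in
  q1 + q2 <= r -> - r <= 2 * q1 - q2 -> - r <= 2 * q2 - q1 -> False.
Proof.
move=> h_neq0 h_lt_c q1 q2 r ineq1 ineq2 ineq3.
have c_gt0 : 0 < c by lia.
have cQ_neq0 : (c%:~R : rat) != 0 by rewrite intr_eq0 gt_eqF.
have frac_ge0 (n k : int) : 0 <= n -> 0 < k -> 0 <= (n%:~R / (k * c)%:~R : rat).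
  by move=> n_ge0 k_gt0; rewrite divr_ge0 // ler0z ?mulr_ge0 //; lia.
have : in_conv [:: e1; e2; e3; y; - y] (toQ (mkpt u v h)).
  apply/in_conv5; exists ((2 * q1 - q2 + r)%:~R / (3 * c)%:~R),
    ((2 * q2 - q1 + r)%:~R / (3 * c)%:~R), ((r - q1 - q2)%:~R / (3 * c)%:~R),
    ((`|h| + h)%:~R / (2 * c)%:~R), ((`|h| - h)%:~R / (2 * c)%:~R).
  split; first by split; apply: frac_ge0; lia.
    by rewrite /q1 /q2 /r !(intrD, intrB, intrM); field.
  by apply: row3P; rewrite !mxE /= /q1 /q2 /r !(intrD, intrB, intrM, intrN); field.
case/closed=> [/(map_f (fun p : pt => p 0 i2)) | /(congr1 (fun p : pt => p 0 i2))].
  by rewrite /= !mxE /= !inE; lia.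
by rewrite !mxE /=; lia.
Qed.

Lemma bipyramid_classification : 0 <= a < c -> 0 <= b < c ->
  [\/ [/\ a = 0, b = 0 & c = 1], [/\ a = 1, b = 2 & c = 3] | [/\ a = 2, b = 1 & c = 3]].
Proof.
move=> /andP[a_ge0 a_lt_c] /andP[b_ge0 b_lt_c].
have [c1 | c_gt1] : c = 1 \/ 1 < c by lia.
  by apply: Or31; split; lia.
have ab_ge : c <= a + b by have /= := @no_lattice_point 0 0 (-1); lia.
have ab_le : a + b <= c by have /= := @no_lattice_point 1 1 1; lia.
have b3 : c <= 3 * b by have /= := @no_lattice_point (-1) 0 (-1); lia.
have a3 : c <= 3 * a by have /= := @no_lattice_point 0 (-1) (-1); lia.
have [a32 | b32] : 2 * c <= 3 * a \/ 2 * c <= 3 * b.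
  by have /= := @no_lattice_point (-1) (-1) (-1); lia.
  have [b1 | b_gt1] : b = 1 \/ 1 < b by lia.
    by apply: Or33; split; lia.
  by have /= := @no_lattice_point 2 1 3; lia.
have [a1 | a_gt1] : a = 1 \/ 1 < a by lia.
  by apply: Or32; split; lia.
by have /= := @no_lattice_point 1 2 3; lia.
Qed.

End Bipyramid.

Lemma bipyramid_normal_form (x1 x2 x3 y1 : pt) :
  fano_triangle x1 x2 x3 -> in_interior [:: x1; x2; x3; y1; - y1] 0 ->
  exists (A : 'M[int]_3) (a b c : int),
    [/\ A \in unitmx,
        actGL A [:: x1; x2; x3; y1; - y1] = [:: e1; e2; e3; mkpt a b c; - mkpt a b c],
        0 <= a < c & 0 <= b < c].
Proof.
move=> /fano_triangle_basis [A1 [A1_unit x1A x2A x3A]] interior.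
have [a [b [c yA]]] : exists a b c, y1 *m A1 = mkpt a b c.
  by do 3 eexists; apply: mkptE.
have c_neq0 : c != 0.
  have [p pS] := interior_coord_neq0 i2 interior A1_unit; apply: contraNneq => c0.
  have plane : all (fun q => (q *m A1) 0 i2 == 0) [:: x1; x2; x3; y1; - y1].
    by rewrite /= x1A x2A x3A mulNmx yA c0 oppr_mkpt oppr0 !mxE.
  exact: (allP plane).
have [k [l [s [s_pm1 a_red b_red]]]] := shear_reduce a b c_neq0.
exists (A1 *m shear k l s), (a + c * k), (b + c * l), (c * s).
split=> //; first by rewrite unitmx_mul A1_unit shear_unit.
by rewrite actGL_mul /actGL /= x1A x2A x3A mulNmx yA mulNmx mulmx_shear !mulmx_shear_plane.
Qed.

Theorem lemma4p4 (x1 x2 x3 y1 : 'rV[int]_3) :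
  minimal_fano [:: x1; x2; x3; y1; - y1] ->
  fano_triangle x1 x2 x3 ->
  exists A : 'M[int]_3, A \in unitmx /\
    ((forall z : 'rV[rat]_3,
        in_conv (actGL A [:: x1; x2; x3; y1; - y1]) z <-> in_conv P1 z) \/
     (forall z : 'rV[rat]_3,
        in_conv (actGL A [:: x1; x2; x3; y1; - y1]) z <-> in_conv P2 z)).
Proof.
move=> [[_ closed interior] _] triangle.
have [A [a [b [c [A_unit S_A a_red b_red]]]]] := bipyramid_normal_form triangle interior.
have closed_A : lattice_closed [:: e1; e2; e3; mkpt a b c; - mkpt a b c].
  by rewrite -S_A; apply: lattice_closed_map.
move: S_A; case: (bipyramid_classification closed_A a_red b_red) => -[-> -> ->] S_A.
- by exists A; split=> //; left=> z; rewrite S_A oppr_mkpt oppr0.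
- by exists A; split=> //; right=> z; rewrite S_A oppr_mkpt.
(* The shear sends y = (2, 1, 3) to -(1, 2, 3), exchanging the apices. *)
exists (A *m shear (-1) (-1) (-1)); split.
  by rewrite unitmx_mul A_unit shear_unit //; right.
right=> z; rewrite actGL_mul S_A /actGL /= !mulNmx !mulmx_shear_plane mulmx_shear.
by rewrite oppr_mkpt in_conv_swap45.
Qed.
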